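(* Let $f,g$ be holomorphic functions on a neighbourhood of $0$ in $\mathbb{C}^n$ vanishing at $0$, and let $\varepsilon>0$ be sufficiently small. The critical points of the map $$\phi=\frac{f/g}{|f/g|}:\mathbb{S}^{2n-1}_\varepsilon\setminus(L_f\cup L_g)\to\mathbb{S}^1$$ are exactly the points $z=(z_1,\dots,z_n)$ at which the vector $i\,\mathrm{grad}\,\log(f/g)(z)$ is a real multiple of $z$.
   Context: $\mathbb{S}^{2n-1}_\varepsilon$ is the sphere of radius $\varepsilon$ about $0$ in $\mathbb{C}^n$, $L_f=f^{-1}(0)\cap\mathbb{S}^{2n-1}_\varepsilon$ and $L_g=g^{-1}(0)\cap\mathbb{S}^{2n-1}_\varepsilon$. For a (meromorphic) function $h$, $\mathrm{grad}\,h=\big(\overline{\partial h/\partial z_1},\dots,\overline{\partial h/\partial z_n}\big)$; thus $\mathrm{grad}\,\log(f/g)$ has $j$-th component $\overline{(\partial f/\partial z_j)/f-(\partial g/\partial z_j)/g}$, defined off $(fg)^{-1}(0)$. *)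

(* C^n is 'rV[R[i]]_n, which is a
   normedModType over R[i], so "differentiable" there is complex (Frechet)
   differentiability, i.e. holomorphy. *)
From HB Require Import structures.
From mathcomp Require Import all_boot all_order all_algebra.
From mathcomp Require Import all_classical all_reals all_analysis.
From mathcomp Require Import complex.
Import Order.TTheory GRing.Theory Num.Theory numFieldNormedType.Exports.
Local Open Scope ring_scope.
Local Open Scope classical_set_scope.

Set Implicit Arguments.
Unset Strict Implicit.
Unset Printing Implicit Defensive.

Notation Cn R n := (('rV[R[i]]_n : normedModType R[i]) : Type) (only parsing).

Definition hnorm2 (R : realType) (n : nat) (z : Cn R n) : R[i] :=
  \sum_(j < n) z ord0 j * (z ord0 j)^*.

Definition sphere (R : realType) (n : nat) (eps : R) : set (Cn R n) :=
  [set z | hnorm2 z = ((eps ^+ 2)%:C)%C].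

Definition holomorphic_on (R : realType) (n : nat) (U : set (Cn R n))
  (f : Cn R n -> (R[i])^o) : Prop :=
  open U /\ forall z, U z -> differentiable f z.

Definition cpartial (R : realType) (n : nat) (f : Cn R n -> (R[i])^o)
  (z : Cn R n) (j : 'I_n) : R[i] := 'D_('e_j) f z.

Definition grad_log_quot (R : realType) (n : nat) (f g : Cn R n -> (R[i])^o)
  (z : Cn R n) : Cn R n :=
  \row_j (cpartial f z j / f z - cpartial g z j / g z)^*.

Definition phi (R : realType) (n : nat) (f g : Cn R n -> (R[i])^o)
  (z : Cn R n) : (R[i])^o :=
  (f z / g z) / `|f z / g z|.

Definition is_rderiv (R : realType) (n : nat) (F : Cn R n -> (R[i])^o)
  (z v : Cn R n) (w : (R[i])^o) : Prop :=
  (fun t : R => (F (z + (t%:C)%C *: v) - F z) / (t%:C)%C) x @[x --> (0 : R)^'] --> w.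

Definition tangent_sphere (R : realType) (n : nat) (z v : Cn R n) : Prop :=
  'Re (\sum_(j < n) v ord0 j * (z ord0 j)^*) = 0.

Definition tangent_circle (R : realType) (u w : R[i]) : Prop :=
  'Re (w * u^*) = 0.

Definition critical_point (R : realType) (n : nat) (f g : Cn R n -> (R[i])^o)
  (eps : R) (z : Cn R n) : Prop :=
  [/\ sphere eps z, f z != 0, g z != 0 &
   ~ (forall w : (R[i])^o, tangent_circle (phi f g z) w ->
        exists v : Cn R n, tangent_sphere z v /\ is_rderiv (phi f g) z v w)].

From HB Require Import structures.
From mathcomp Require Import all_boot all_order all_algebra.
From mathcomp Require Import all_classical all_reals all_analysis.
From mathcomp Require Import complex ring.
Import Order.TTheory GRing.Theory Num.Theory numFieldNormedType.Exports.
Local Open Scope ring_scope.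
Local Open Scope classical_set_scope.

Set Implicit Arguments.
Unset Strict Implicit.
Unset Printing Implicit Defensive.

(* Along the real line t |-> z + t v put h = f/g.  Differentiating the phase,
   d/dt (h/|h|) = (h/|h|) i Im(h'/h), and h'/h = sum_j v_j (d_j f/f - d_j g/g)
   is the Hermitian product <v, grad log(f/g)> = sum_j v_j conj(grad_j).  Hence
   d phi_z (v) = phi(z) i Re <v, i grad log(f/g)(z)>, so the differential maps
   T_z S onto the tangent line of S^1 unless the real functional
   Re <., i grad log(f/g)(z)> vanishes on T_z S = {v | Re <v, z> = 0}, i.e.
   unless i grad log(f/g)(z) is a real multiple of z.  That f and g vanish at 0
   plays no role: eps only has to be small enough for the sphere to lie in the
   domain of f and g. *)

Section DerivativeAlongReals.
Variable R : realType.
Local Notation C := ((R[i] : numFieldType) : Type).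

Lemma normc_real (t : R) : `|t%:C%C| = `|t|%:C%C :> C.
Proof. by rewrite normc_def /= expr0n /= addr0 sqrtr_sqr. Qed.

Lemma real_complex_cvg_dnbhs0 :
  (fun t : R => t%:C%C : C) @ (0 : R)^' --> (0 : C)^'.
Proof.
move=> P; rewrite /dnbhs /within /= => /nbhs_ballP[e /= e_gt0 He].
apply/nbhs_ballP.
have /andP[/eqP Ime0 Ree_gt0] : (complex.Im e == 0) && (0 < complex.Re e).
  by move: e_gt0; rewrite ltcE.
exists (complex.Re e) => // t /= t_near t_neq0; apply: He.
  move: t_near; rewrite /ball /ball_ /= !sub0r !normrN normc_real.
  by rewrite ltcE /= Ime0 eqxx.
by rewrite eq_complex /= negb_and t_neq0.
Qed.

Lemma real_complex_cvg0 : (fun t : R => t%:C%C : C) @ (0 : R)^' --> (0 : C).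
Proof. by move=> P /nbhs_dnbhs; apply: real_complex_cvg_dnbhs0. Qed.

Lemma real_complex_neq0_near : \forall t \near (0 : R)^', t%:C%C != 0 :> C.
Proof.
near=> t; rewrite eq_complex /= negb_and; apply/orP; left.
by near: t; exact: nbhs_dnbhs_neq.
Unshelve. all: by end_near. Qed.

Lemma cvg_conjC {T} {F : set_system T} {FF : Filter F} (h : T -> C) (a : C) :
  h @ F --> a -> (fun x => (h x)^*) @ F --> a^*.
Proof.
move=> /cvgrPdist_lt ha; apply/cvgrPdist_lt => e e_gt0.
by apply: filterS (ha e e_gt0) => x; rewrite -rmorphB norm_conjC.
Qed.

Lemma mul_phase_conj (h : C) : h != 0 -> h / `|h| * (h / `|h|)^* = 1.
Proof.
move=> h_neq0; rewrite -normCK normrM normfV normr_id divff ?expr1n //.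
by rewrite normr_eq0.
Qed.

(* [h0] stands for the value at [0]; [h] itself is never evaluated there. *)
Definition has_deriv0 (h : R -> C) (h0 l : C) : Prop :=
  (fun t => (h t - h0) / t%:C%C) @ (0 : R)^' --> l.

Lemma has_deriv0_cvg h h0 l : has_deriv0 h h0 l -> h @ (0 : R)^' --> h0.
Proof.
move=> hl.
have E : {near (0 : R)^', (fun t => h0 + t%:C%C * ((h t - h0) / t%:C%C)) =1 h}.
  near=> t; have t_neq0 : t%:C%C != 0 :> C.
    by near: t; exact: real_complex_neq0_near.
  by rewrite /=; field.
apply: cvg_trans (near_eq_cvg E) _.
have lim : (fun t => h0 + t%:C%C * ((h t - h0) / t%:C%C)) @ (0 : R)^'
    --> h0 + 0 * l.
  exact: cvgD (cvg_cst _) (cvgM real_complex_cvg0 hl).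
by rewrite mul0r addr0 in lim.
Unshelve. all: by end_near. Qed.

Lemma has_deriv0_div f g f0 g0 A B : g0 != 0 ->
  has_deriv0 f f0 A -> has_deriv0 g g0 B ->
  has_deriv0 (fun t => f t / g t) (f0 / g0) ((A * g0 - f0 * B) / (g0 * g0)).
Proof.
move=> g0_neq0 fA gB; have g_cvg := has_deriv0_cvg gB.
have E : {near (0 : R)^', (fun t => ((f t - f0) / t%:C%C * g0
      - f0 * ((g t - g0) / t%:C%C)) / (g t * g0))
    =1 (fun t => (f t / g t - f0 / g0) / t%:C%C)}.
  near=> t; have t_neq0 : t%:C%C != 0 :> C.
    by near: t; exact: real_complex_neq0_near.
  have gt_neq0 : g t != 0 by near: t; exact: cvgr_neq0 g_cvg g0_neq0.
  by rewrite /=; field; rewrite t_neq0 gt_neq0 g0_neq0.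
apply: cvg_trans (near_eq_cvg E) _.
apply: cvgM; first exact: cvgB (cvgM fA (cvg_cst _)) (cvgM (cvg_cst _) gB).
apply: cvgV; first by rewrite mulf_neq0.
exact: cvgM g_cvg (cvg_cst _).
Unshelve. all: by end_near. Qed.

Lemma has_deriv0_norm h h0 l : h0 != 0 -> has_deriv0 h h0 l ->
  has_deriv0 (fun t => `|h t|) `|h0| ((l * h0^* + h0 * l^*) / (`|h0| + `|h0|)).
Proof.
move=> h0_neq0 hl; have h_cvg := has_deriv0_cvg hl.
(* [|h t| - |h0| = (|h t|^2 - |h0|^2) / (|h t| + |h0|)], and [|h|^2] is smooth. *)
have E : {near (0 : R)^', (fun t => ((h t - h0) / t%:C%C * (h t)^*
      + h0 * ((h t - h0) / t%:C%C)^*) / (`|h t| + `|h0|))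
    =1 (fun t => (`|h t| - `|h0|) / t%:C%C)}.
  near=> t; have t_neq0 : t%:C%C != 0 :> C.
    by near: t; exact: real_complex_neq0_near.
  have sum_neq0 : `|h t| + `|h0| != 0 by rewrite gt_eqF // ltr_wpDl // normr_gt0.
  rewrite /= rmorphM fmorphV rmorphB /= [(t%:C%C)^*]conj_Creal ?complex_real //.
  have -> : (h t - h0) / t%:C%C * (h t)^* + h0 * (((h t)^* - h0^*) / t%:C%C)
      = (h t * (h t)^* - h0 * h0^*) / t%:C%C by field.
  by rewrite -!normCK; field; rewrite t_neq0 sum_neq0.
apply: cvg_trans (near_eq_cvg E) _.
apply: cvgM.
  exact: cvgD (cvgM hl (cvg_conjC h_cvg)) (cvgM (cvg_cst _) (cvg_conjC hl)).
apply: cvgV; first by rewrite gt_eqF // addr_gt0 // normr_gt0.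
exact: cvgD (cvg_norm h_cvg) (cvg_cst _).
Unshelve. all: by end_near. Qed.

Lemma has_deriv0_phase h h0 l : h0 != 0 -> has_deriv0 h h0 l ->
  has_deriv0 (fun t => h t / `|h t|) (h0 / `|h0|)
    (h0 / `|h0| * ('i * 'Im (l / h0))).
Proof.
move=> h0_neq0 hl; have N_gt0 : 0 < `|h0| by rewrite normr_gt0.
have := has_deriv0_div (lt0r_neq0 N_gt0) hl (has_deriv0_norm h0_neq0 hl).
congr has_deriv0.
have [X ->] : exists X, l = X * h0 by exists (l / h0); rewrite divfK.
have iIm : 'i * 'Im X = (X - X^*) / 2.
  by rewrite ImE !mulrA mulCii mulN1r opprB.
move: N_gt0 (addr_gt0 N_gt0 N_gt0).
set N := `|h0| => /lt0r_neq0 N_neq0 /lt0r_neq0 NN_neq0.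
have conj_h0 : h0^* = N ^+ 2 / h0 by rewrite normCK mulrAC mulfV ?mul1r.
rewrite mulfK // iIm rmorphM /= conj_h0.
by field; rewrite N_neq0 NN_neq0 h0_neq0.
Qed.

Lemma has_deriv0_phase_div f g f0 g0 A B : f0 != 0 -> g0 != 0 ->
  has_deriv0 f f0 A -> has_deriv0 g g0 B ->
  has_deriv0 (fun t => f t / g t / `|f t / g t|) (f0 / g0 / `|f0 / g0|)
    (f0 / g0 / `|f0 / g0| * ('i * 'Im (A / f0 - B / g0))).
Proof.
move=> f0_neq0 g0_neq0 fA gB.
have fg0_neq0 : f0 / g0 != 0 by rewrite mulf_neq0 ?invr_eq0.
have := has_deriv0_phase fg0_neq0 (has_deriv0_div g0_neq0 fA gB).
by congr (has_deriv0 _ _ (_ * ('i * 'Im _))); field; rewrite f0_neq0 g0_neq0.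
Qed.

End DerivativeAlongReals.

Lemma sum_mulr_divB (K : fieldType) n (u c d : 'I_n -> K) (a b : K) :
  (\sum_(j < n) u j * c j) / a - (\sum_(j < n) u j * d j) / b
  = \sum_(j < n) u j * (c j / a - d j / b).
Proof.
by rewrite !mulr_suml -sumrB; apply: eq_bigr => j _; rewrite mulrBr !mulrA.
Qed.

Section Holomorphic.
Variables (R : realType) (n : nat).
Local Notation C := ((R[i] : numFieldType) : Type).
Implicit Types (F f g : Cn R n -> (R[i])^o) (z v y : Cn R n).

Definition hdot v y : C := \sum_(j < n) v ord0 j * (y ord0 j)^*.

Lemma hdotBl v w y : hdot (v - w) y = hdot v y - hdot w y.
Proof. by rewrite /hdot -sumrB; apply: eq_bigr => j _; rewrite !mxE mulrBl. Qed.

Lemma hdotBr v y w : hdot v (y - w) = hdot v y - hdot v w.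
Proof.
by rewrite /hdot -sumrB; apply: eq_bigr => j _; rewrite !mxE rmorphB mulrBr.
Qed.

Lemma hdotZl v y (c : C) : hdot (c *: v) y = c * hdot v y.
Proof. by rewrite /hdot mulr_sumr; apply: eq_bigr => j _; rewrite !mxE mulrA. Qed.

Lemma hdotZr v y (c : C) : hdot v (c *: y) = c^* * hdot v y.
Proof.
by rewrite /hdot mulr_sumr; apply: eq_bigr => j _; rewrite !mxE rmorphM mulrCA.
Qed.

Lemma diff_cpartial F z v : differentiable F z ->
  'd F z v = \sum_(j < n) v ord0 j * cpartial F z j.
Proof.
move=> dF; rewrite {1}(row_sum_delta v) linear_sum.
by apply: eq_bigr => j _; rewrite linearZ /cpartial deriveE.
Qed.

Lemma differentiable_is_rderiv F z v : differentiable F z ->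
  is_rderiv F z v (\sum_(j < n) v ord0 j * cpartial F z j).
Proof.
move=> dF; rewrite -diff_cpartial // -(deriveE v dF) /derive.
have := cvg_comp _ _ (@real_complex_cvg_dnbhs0 R)
  (@diff_derivable _ _ _ F z v dF).
apply: cvg_trans; apply: near_eq_cvg; near=> t.
by rewrite /= [_ *: v + z]addrC [RHS]mulrC.
Unshelve. all: by end_near. Qed.

Lemma sum_cpartial_log_quot f g z v :
  (\sum_(j < n) v ord0 j * cpartial f z j) / f z
    - (\sum_(j < n) v ord0 j * cpartial g z j) / g z
  = hdot v (grad_log_quot f g z).
Proof.
apply: etrans (sum_mulr_divB _ _ _ _ _) _.
by apply: eq_bigr => j _; rewrite !mxE conjCK.
Qed.

Lemma is_rderiv_phi f g z v :
  differentiable f z -> differentiable g z -> f z != 0 -> g z != 0 ->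
  is_rderiv (phi f g) z v
    (phi f g z * ('i * 'Re (hdot v ('i *: grad_log_quot f g z)))).
Proof.
move=> df dg fz_neq0 gz_neq0.
have := has_deriv0_phase_div fz_neq0 gz_neq0
  (differentiable_is_rderiv (v:=v) df) (differentiable_is_rderiv (v:=v) dg).
by rewrite sum_cpartial_log_quot hdotZr conjCi mulNr raddfN /= ReMil opprK.
Qed.

Lemma hdot_self_ge0 v : 0 <= hdot v v.
Proof. by apply: sumr_ge0 => j _; exact: mul_conjC_ge0. Qed.

Lemma hdot_self_eq0 v : (hdot v v == 0) = (v == 0).
Proof.
apply/eqP/eqP => [|->]; last by rewrite /hdot big1 // => j _; rewrite mxE mul0r.
move=> /psumr_eq0P vv0; apply/rowP => j; rewrite mxE.
have /eqP := vv0 (fun j _ => mul_conjC_ge0 _) j isT.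
by rewrite mul_conjC_eq0 => /eqP.
Qed.

Lemma Re_hdot_annihilatorP z y : z != 0 ->
  (forall v, 'Re (hdot v z) = 0 -> 'Re (hdot v y) = 0) <->
  exists lam : R, y = lam%:C%C *: z.
Proof.
move=> z_neq0; split => [annih | [lam ->] v]; last first.
  rewrite hdotZr conj_Creal ?complex_real // ReMl ?complex_real //.
  by move=> ->; rewrite mulr0.
(* Project [y] on the real line through [z]: the remainder [w] is real-orthogonal
   to [z], hence to [y], hence to itself. *)
have zz_gt0 : 0 < hdot z z by rewrite lt_def hdot_self_eq0 z_neq0 hdot_self_ge0.
pose mu := 'Re (hdot y z) / hdot z z.
have mu_real : mu \is Num.real.
  by rewrite rpredM ?rpredV ?Creal_Re ?(gtr0_real zz_gt0).
pose w := y - mu *: z.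
have wz : 'Re (hdot w z) = 0.
  rewrite hdotBl hdotZl raddfB /= divfK ?gt_eqF //.
  by rewrite (Creal_ReP _ (Creal_Re _)) subrr.
have ww : 'Re (hdot w w) = 0.
  rewrite [in hdot w _]/w hdotBr hdotZr raddfB /= annih //.
  by rewrite (conj_Creal mu_real) ReMl // wz mulr0 subrr.
have /eqP : w = 0.
  apply/eqP; rewrite -hdot_self_eq0.
  by rewrite -(Creal_ReP _ (ger0_real (hdot_self_ge0 w))) ww.
by rewrite subr_eq0 => /eqP ->; exists (complex.Re mu); rewrite RRe_real.
Qed.

Lemma is_rderiv_unique F z v w w' :
  is_rderiv F z v w -> is_rderiv F z v w' -> w = w'.
Proof. exact: cvg_unique. Qed.

Lemma rderiv_tangent_surjP F z y :
  F z * (F z)^* = 1 ->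
  (forall v, is_rderiv F z v (F z * ('i * 'Re (hdot v y)))) ->
  (forall w, tangent_circle (F z) w ->
     exists v, tangent_sphere z v /\ is_rderiv F z v w) <->
  exists2 v, tangent_sphere z v & 'Re (hdot v y) != 0.
Proof.
move=> Fz_unit dF; have Fz_neq0 : F z != 0.
  by apply: contra_eq_neq Fz_unit => ->; rewrite mul0r eq_sym oner_eq0.
split => [surj | [v0 tv0 r_neq0] w tw].
  have tw : tangent_circle (F z) (F z * 'i).
    by rewrite /tangent_circle mulrAC Fz_unit mul1r Re_i.
  have [v [tv dv]] := surj _ tw; exists v => //; apply/eqP => r0.
  move: (is_rderiv_unique dv (dF v)); rewrite r0 !mulr0 => /eqP.
  by rewrite mulf_eq0 (negbTE Fz_neq0) (negbTE (neq0Ci _)).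
pose c := w * (F z)^*; pose r := 'Re (hdot v0 y).
pose s := complex.Re ('Im c / r).
have sE : s%:C%C = 'Im c / r.
  by rewrite RRe_real // rpredM ?rpredV ?Creal_Im ?Creal_Re.
exists (s%:C%C *: v0); split.
  by rewrite /tangent_sphere -/(hdot _ _) hdotZl ReMl ?complex_real // tv0 mulr0.
suff -> : w = F z * ('i * 'Re (hdot (s%:C%C *: v0) y)) by exact: dF.
have c_imag : c = 'i * 'Im c by rewrite {1}[c]Crect tw add0r.
rewrite hdotZl ReMl ?complex_real // -/r sE divfK //.
by rewrite -c_imag mulrCA Fz_unit mulr1.
Qed.

Lemma sphere_neq0 eps z : 0 < eps -> sphere eps z -> z != 0.
Proof.
move=> eps_gt0 Sz; rewrite -hdot_self_eq0; change (hnorm2 z != 0).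
by rewrite Sz eq_complex /= negb_and expf_eq0 /= gt_eqF.
Qed.

Lemma sphere_entry_le eps z j :
  0 <= eps -> sphere eps z -> `|z ord0 j| <= eps%:C%C.
Proof.
move=> eps_ge0 Sz; rewrite -(@ler_pXn2r _ 2) ?nnegrE ?normr_ge0 ?ler0c //.
rewrite normCK -rmorphXn /= -Sz /hnorm2 (bigD1 j) //= lerDl.
by apply: sumr_ge0 => k _; exact: mul_conjC_ge0.
Qed.

Lemma sphere_norm_le eps z : 0 <= eps -> sphere eps z -> `|z| <= eps%:C%C.
Proof.
move=> eps_ge0 Sz; have -> : `|z| = mx_norm z by [].
have [->|/mx_norm_neq0[[i j] ->]] := eqVneq (mx_norm z) 0; first by rewrite ler0c.
by rewrite (ord1 i); exact: sphere_entry_le.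
Qed.

Lemma small_spheres_sub (U : set (Cn R n)) : nbhs 0 U ->
  exists2 e : R, 0 < e & forall eps, 0 < eps < e -> sphere eps `<=` U.
Proof.
move=> /nbhs_normP[e /= e_gt0 sub].
have /andP[/eqP Ime0 Ree_gt0] : (complex.Im e == 0) && (0 < complex.Re e).
  by move: e_gt0; rewrite ltcE.
exists (complex.Re e) => // eps /andP[eps_gt0 eps_lt] z Sz; apply: sub.
rewrite /ball_ /= sub0r normrN (le_lt_trans (sphere_norm_le (ltW eps_gt0) Sz)) //.
by rewrite -[e]RRe_real ?gtr0_real // ltcR.
Qed.

End Holomorphic.

Theorem lemma2p2 (R : realType) (n : nat) (U : set (Cn R n))
  (f g : Cn R n -> (R[i])^o) :
  U 0 -> holomorphic_on U f -> holomorphic_on U g ->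
  f 0 = 0 -> g 0 = 0 ->
  exists e0 : R, 0 < e0 /\
    forall eps : R, 0 < eps < e0 ->
      forall z : Cn R n,
        critical_point f g eps z <->
        [/\ sphere eps z, f z != 0, g z != 0 &
         exists lam : R, ('i)%C *: grad_log_quot f g z = (lam%:C)%C *: z].
Proof.
move=> U0 [U_open dfU] [_ dgU] _ _.
have U_nbhs : nbhs 0 U by apply: open_nbhs_nbhs; split.
have [e e_gt0 small_sub] := small_spheres_sub U_nbhs.
exists e; split=> // eps eps_range z.
have eps_gt0 : 0 < eps by case/andP: eps_range.
suff crit_iff : sphere eps z -> f z != 0 -> g z != 0 ->
    (~ forall w : (R[i])^o, tangent_circle (phi f g z) w ->
         exists v, tangent_sphere z v /\ is_rderiv (phi f g) z v w) <->
    exists lam : R, ('i)%C *: grad_log_quot f g z = (lam%:C)%C *: z.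
  by split=> -[Sz fz gz H]; split=> //; apply/(crit_iff Sz fz gz).
move=> Sz fz gz; have Uz := small_sub eps eps_range z Sz.
rewrite -Re_hdot_annihilatorP ?(sphere_neq0 eps_gt0 Sz) //.
have dphi v := is_rderiv_phi (v:=v) (dfU z Uz) (dgU z Uz) fz gz.
rewrite (rderiv_tangent_surjP _ dphi); last first.
  by apply: mul_phase_conj; rewrite mulf_neq0 ?invr_eq0.
split=> [no_v v tv | annih [v tv]]; last by rewrite annih ?eqxx.
by apply/eqP/negPn/negP => r_neq0; apply: no_v; exists v.
Qed.
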